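(* Let $\tau$ be a continuous distributive triangle function on $\Delta^+$, $\Sigma$ a $\sigma$-ring of subsets of $\Omega\ne\emptyset$, and $\gamma^1,\gamma^2$ $\tau$-decomposable measures on $\Sigma$ continuous from below. If a measurable $f:\Omega\to[0,+\infty]$ is $\gamma^i$-integrable on $E\in\Sigma$ for $i=1,2$, then $f$ is $(\gamma^1\oplus_\tau\gamma^2)$-integrable on $E$ and $$\int_E f\,d(\gamma^1\oplus_\tau\gamma^2)=\int_E f\,d\gamma^1\ \oplus_\tau\ \int_E f\,d\gamma^2,$$ where $(\gamma^1\oplus_\tau\gamma^2)_F:=\tau(\gamma^1_F,\gamma^2_F)$ for $F\in\Sigma$.
   Context: $\Delta^+$: functions $F:[-\infty,+\infty]\to[0,1]$ non-decreasing, left-continuous on $\mathbb{R}$, $F(x)=0$ for $x\le0$, $F(+\infty)=1$, ordered pointwise; $\varepsilon_a(x)=1$ if $x>a$, else $0$. Triangle function: symmetric, associative $\tau:\Delta^+\times\Delta^+\to\Delta^+$, non-decreasing in each variable, identity $\varepsilon_0$; $G\oplus_\tau H=\tau(G,H)$, $\bigoplus_{k=1}^nG_k=\tau(G_1,\bigoplus_{k=2}^nG_k)$. $c\odot G=\varepsilon_0$ if $c=0$, $(c\odot G)(x)=G(x/c)$ if $c>0$; $\tau$ distributive if $c\odot(G\oplus H)=(c\odot G)\oplus(c\odot H)$ for all $c\ge0$. Convergence in $\Delta^+$ is weak convergence; $\tau$ continuous if continuous for it. $\tau$-decomposable measure on a ring $\Sigma$: $\gamma:\Sigma\to\Delta^+$,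 $\gamma_\emptyset=\varepsilon_0$, $\gamma_{E\cup F}=\tau(\gamma_E,\gamma_F)$ for disjoint $E,F$; continuous from below: $\gamma_{E_n}\to\gamma_E$ whenever $E_n\subseteq E_{n+1}$, $\bigcup E_n=E$ in $\Sigma$. Simple function $\sum_{i=1}^nx_i\chi_{E_i}$ ($x_i\in[0,\infty)$, $E_i\in\Sigma$ pairwise disjoint), $\int_Ef\,d\gamma=\bigoplus_ix_i\odot\gamma_{E\cap E_i}$. Measurable: pointwise limit of simple functions. $\mathcal S_{f,E}$: simple $\mathfrak f\le f$ on $E$. $f$ is $\gamma$-integrable on $E$ if some $H\in\Delta^+$ satisfies $\int_E\mathfrak f\,d\gamma\ge H$ for all $\mathfrak f\in\mathcal S_{f,E}$; then $\int_Ef\,d\gamma=\inf\{\int_E\mathfrak f\,d\gamma:\mathfrak f\in\mathcal S_{f,E}\}$ in $(\Delta^+,\le)$. *)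

From mathcomp Require Import all_boot all_order all_algebra.
From mathcomp Require Import all_classical all_reals all_analysis.
From Stdlib Require Import ClassicalEpsilon.
Import Order.TTheory GRing.Theory Num.Theory.
Import numFieldNormedType.Exports.
Set Implicit Arguments.
Unset Strict Implicit.
Unset Printing Implicit Defensive.
Local Open Scope classical_set_scope.
Local Open Scope ring_scope.

(* Elements of Delta^+ are represented as functions [-oo,+oo] -> R
   satisfying the predicate [D_distF]. *)
Definition D_distF (R : realType) (F : \bar R -> R) : Prop :=
  [/\ (forall x, 0 <= F x <= 1),
      (forall x y : \bar R, (x <= y)%E -> F x <= F y),
      (forall x : R, (fun y : R => F y%:E) @ x^'- --> F x%:E),
      (forall x : \bar R, (x <= 0)%E -> F x = 0) &
      F +oo%E = 1].

Definition D_eps (R : realType) (a : R) : \bar R -> R :=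
  fun x => if (a%:E < x)%E then 1 else 0.

Definition D_dle (R : realType) (F G : \bar R -> R) : Prop :=
  forall x, F x <= G x.

Definition D_smul (R : realType) (c : R) (G : \bar R -> R) : \bar R -> R :=
  if c == 0 then D_eps 0 else fun x => G (x * (c^-1)%:E)%E.

Definition D_dcvg (R : realType) (Fn : nat -> \bar R -> R) (F : \bar R -> R)
  : Prop :=
  forall x : R, {for x, continuous (fun y : R => F y%:E)} ->
    (fun n => Fn n x%:E) @ \oo --> F x%:E.

Definition D_triangle_function (R : realType)
  (tau : (\bar R -> R) -> (\bar R -> R) -> (\bar R -> R)) : Prop :=
  [/\ (forall F G, D_distF F -> D_distF G -> D_distF (tau F G)),
      (forall F G, D_distF F -> D_distF G -> tau F G = tau G F),
      (forall F G H, D_distF F -> D_distF G -> D_distF H ->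
         tau F (tau G H) = tau (tau F G) H),
      (forall F G H, D_distF F -> D_distF G -> D_distF H -> D_dle F G ->
         D_dle (tau F H) (tau G H) /\ D_dle (tau H F) (tau H G)) &
      (forall F, D_distF F -> tau F (D_eps 0) = F)].

Definition D_tau_continuous (R : realType)
  (tau : (\bar R -> R) -> (\bar R -> R) -> (\bar R -> R)) : Prop :=
  forall (Fn Gn : nat -> \bar R -> R) (F G : \bar R -> R),
    (forall n, D_distF (Fn n)) -> (forall n, D_distF (Gn n)) ->
    D_distF F -> D_distF G -> D_dcvg Fn F -> D_dcvg Gn G ->
    D_dcvg (fun n => tau (Fn n) (Gn n)) (tau F G).

Definition D_tau_distributive (R : realType)
  (tau : (\bar R -> R) -> (\bar R -> R) -> (\bar R -> R)) : Prop :=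
  forall (c : R) (G H : \bar R -> R), 0 <= c -> D_distF G -> D_distF H ->
    D_smul c (tau G H) = tau (D_smul c G) (D_smul c H).

Definition D_decomposable (R : realType) (Omega : Type)
  (tau : (\bar R -> R) -> (\bar R -> R) -> (\bar R -> R))
  (Sigma : set (set Omega)) (gamma : set Omega -> \bar R -> R) : Prop :=
  [/\ (forall E, Sigma E -> D_distF (gamma E)),
      gamma set0 = D_eps 0 &
      (forall E F, Sigma E -> Sigma F -> E `&` F = set0 ->
         gamma (E `|` F) = tau (gamma E) (gamma F))].

Definition D_cont_from_below (R : realType) (Omega : Type)
  (Sigma : set (set Omega)) (gamma : set Omega -> \bar R -> R) : Prop :=
  forall (En : nat -> set Omega) (E : set Omega),
    (forall n, Sigma (En n)) -> (forall n, En n `<=` En n.+1) ->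
    Sigma E -> \bigcup_n En n = E ->
    D_dcvg (fun n => gamma (En n)) (gamma E).

Definition D_msum (R : realType) (Omega : Type)
  (tau : (\bar R -> R) -> (\bar R -> R) -> (\bar R -> R))
  (g1 g2 : set Omega -> \bar R -> R) : set Omega -> \bar R -> R :=
  fun F => tau (g1 F) (g2 F).

(* A simple function sum_i x_i chi_{E_i} is given by the list of pairs
   (x_i, E_i). *)
Definition D_simple_rep (R : realType) (Omega : Type) (Sigma : set (set Omega))
  (s : seq (R * set Omega)) : Prop :=
  [/\ (forall p, p \in s -> 0 <= p.1),
      (forall p, p \in s -> Sigma p.2) &
      (forall i j, (i < size s)%N -> (j < size s)%N -> i != j ->
         (nth (0, set0) s i).2 `&` (nth (0, set0) s j).2 = set0)].

Definition D_simple_eval (R : realType) (Omega : Type)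
  (s : seq (R * set Omega)) (w : Omega) : R :=
  \sum_(p <- s) p.1 * \1_(p.2) w.

Definition D_simple_integral (R : realType) (Omega : Type)
  (tau : (\bar R -> R) -> (\bar R -> R) -> (\bar R -> R))
  (gamma : set Omega -> \bar R -> R) (E : set Omega)
  (s : seq (R * set Omega)) : \bar R -> R :=
  foldr (fun p acc => tau (D_smul p.1 (gamma (E `&` p.2))) acc) (D_eps 0) s.

Definition D_simple_measurable (R : realType) (Omega : Type)
  (Sigma : set (set Omega)) (f : Omega -> \bar R) : Prop :=
  exists sn : nat -> seq (R * set Omega),
    (forall n, D_simple_rep Sigma (sn n)) /\
    (forall w, (fun n => (D_simple_eval (sn n) w)%:E) @ \oo --> f w).

Definition D_simple_integrals (R : realType) (Omega : Type)
  (tau : (\bar R -> R) -> (\bar R -> R) -> (\bar R -> R))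
  (Sigma : set (set Omega)) (gamma : set Omega -> \bar R -> R)
  (E : set Omega) (f : Omega -> \bar R) : set (\bar R -> R) :=
  [set G | exists s, [/\ D_simple_rep Sigma s,
      (forall w, E w -> ((D_simple_eval s w)%:E <= f w)%E) &
      G = D_simple_integral tau gamma E s]].

Definition D_integrable (R : realType) (Omega : Type)
  (tau : (\bar R -> R) -> (\bar R -> R) -> (\bar R -> R))
  (Sigma : set (set Omega)) (gamma : set Omega -> \bar R -> R)
  (E : set Omega) (f : Omega -> \bar R) : Prop :=
  exists H, D_distF H /\
    (forall G, D_simple_integrals tau Sigma gamma E f G -> D_dle H G).

Definition D_is_dinf (R : realType) (S : set (\bar R -> R)) (I : \bar R -> R)
  : Prop :=
  [/\ D_distF I, (forall G, S G -> D_dle I G) &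
      (forall H, D_distF H -> (forall G, S G -> D_dle H G) -> D_dle H I)].

Definition D_dintegral (R : realType) (Omega : Type)
  (tau : (\bar R -> R) -> (\bar R -> R) -> (\bar R -> R))
  (Sigma : set (set Omega)) (gamma : set Omega -> \bar R -> R)
  (E : set Omega) (f : Omega -> \bar R) : \bar R -> R :=
  epsilon (inhabits (D_eps (0 : R)))
    (D_is_dinf (D_simple_integrals tau Sigma gamma E f)).

From mathcomp Require Import all_boot all_order all_algebra.
From mathcomp Require Import all_classical all_reals all_analysis.
From Stdlib Require Import ClassicalEpsilon.
Import Order.TTheory GRing.Theory Num.Theory.
Import numFieldNormedType.Exports.
Set Implicit Arguments.
Unset Strict Implicit.
Unset Printing Implicit Defensive.
Local Open Scope classical_set_scope.
Local Open Scope ring_scope.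

(* A simple function has integral [tau] of its two integrals against
   [gamma^1 (+) gamma^2], by distributivity and the exchange law
   [tau (tau a b) (tau c d) = tau (tau a c) (tau b d)]; hence the infimum
   over [S_{f,E}] dominates [tau] of the two infima. Conversely, simple
   minorants are closed under pointwise maximum, which makes the simple
   integral smaller, so for each [n] one minorant [T n] comes within [1/n.+1]
   of both infima at every point of a finite grid. The integrals of [T n]
   then converge weakly to the two infima, continuity of [tau] yields the
   reverse inequality at the continuity points of [tau] of the infima, and
   left continuity together with the density of continuity points extends it
   everywhere. *)

Section Delta.
Variable R : realType.
Local Notation dist := (\bar R -> R).
Implicit Types F G H : dist.

Lemma distF_ge0 F x : D_distF F -> 0 <= F x.
Proof. by case=> /(_ x) /andP[]. Qed.

Lemma distF_le1 F x : D_distF F -> F x <= 1.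
Proof. by case=> /(_ x) /andP[]. Qed.

Lemma distF_le F x y : D_distF F -> (x <= y)%E -> F x <= F y.
Proof. by case=> _ + *; apply. Qed.

Lemma distF_cvg_left F (x : R) : D_distF F ->
  (fun y : R => F y%:E) @ x^'- --> F x%:E.
Proof. by case. Qed.

Lemma distF_nonpos F x : D_distF F -> (x <= 0)%E -> F x = 0.
Proof. by case=> _ _ _ + _; apply. Qed.

Lemma distF_pinfty F : D_distF F -> F +oo%E = 1.
Proof. by case. Qed.

Lemma distF_eps0 : D_distF (D_eps (0 : R)).
Proof.
have eps0_cvg (g : R -> R) (x c : R) : g x = c ->
    (\forall y \near x^'-, g y = c) -> g @ x^'- --> g x.
  move=> -> ev; apply: cvg_trans (near_eq_cvg _) (cvg_cst c).
  by near=> y; rewrite (near ev y).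
rewrite /D_eps; split.
- by move=> x; case: ifP => _; rewrite ?lexx ?ler01.
- move=> x y xy; case: ifP => h; case: ifP => h' //.
  by move: h'; rewrite (lt_le_trans h xy).
- move=> x; have [x0|x0] := ltP 0 x.
    apply: (eps0_cvg _ x 1); first by rewrite lte_fin x0.
    by near=> y; rewrite lte_fin ifT //; near: y; apply: nbhs_left_gt.
  apply: (eps0_cvg _ x 0); first by rewrite lte_fin ltNge x0.
  near=> y; rewrite lte_fin ifF //; apply/negbTE; rewrite -leNgt.
  by apply/(le_trans _ x0)/ltW; near: y; apply: nbhs_left_lt.
- by move=> x x0; rewrite ifF //; apply/negbTE; rewrite -leNgt.
- by rewrite ltry.
Unshelve. all: by end_near. Qed.

Lemma dle_eps0 G : D_distF G -> D_dle G (D_eps 0).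
Proof.
move=> dG x; rewrite /D_eps; case: ifP => h; first exact: distF_le1.
by rewrite distF_nonpos // leNgt h.
Qed.

Lemma dle_trans F G H : D_dle F G -> D_dle G H -> D_dle F H.
Proof. by move=> FG GH x; exact: le_trans (FG x) (GH x). Qed.

Lemma dle_anti F G : D_dle F G -> D_dle G F -> F = G.
Proof. by move=> FG GF; apply: funext => x; apply/eqP; rewrite eq_le FG GF. Qed.

Lemma smul0 G : D_smul 0 G = D_eps 0.
Proof. by rewrite /D_smul eqxx. Qed.

Lemma smulE (c : R) G x : 0 < c -> D_smul c G x = G (x * (c^-1)%:E)%E.
Proof. by move=> c0; rewrite /D_smul gt_eqF. Qed.

Lemma distF_smul c G : 0 <= c -> D_distF G -> D_distF (D_smul c G).
Proof.
rewrite le_eqVlt => /predU1P[<-|c0] dG; first by rewrite smul0; exact: distF_eps0.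
have ci : (0 <= (c^-1)%:E)%E by rewrite lee_fin invr_ge0 ltW.
split.
- by move=> x; rewrite smulE // distF_ge0 // distF_le1.
- by move=> x y xy; rewrite !smulE //; apply: distF_le => //; exact: lee_wpmul2r.
- move=> x; rewrite smulE //; apply/cvg_at_leftP => u [ux ucv].
  under eq_fun do rewrite smulE // -EFinM.
  rewrite -EFinM; apply: (cvg_at_leftP (fun y => G y%:E) (x * c^-1) _).1.
    exact: distF_cvg_left.
  split; first by move=> n; rewrite ltr_pM2r ?invr_gt0.
  exact: cvgM ucv (cvg_cst _).
- by move=> x x0; rewrite smulE // distF_nonpos // -(mul0e (c^-1)%:E) lee_wpmul2r.
- by rewrite smulE // mulyr gtr0_sg ?invr_gt0 // mul1e distF_pinfty.
Qed.

Lemma smul_eps0 c : 0 <= c -> D_smul c (D_eps 0) = D_eps (0 : R).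
Proof.
rewrite le_eqVlt => /predU1P[<-|c0]; first exact: smul0.
apply: funext => -[r||]; rewrite smulE // /D_eps /= ?lte_fin.
- by rewrite pmulr_lgt0 // invr_gt0.
- by rewrite mulyr gtr0_sg ?invr_gt0 // mul1e.
- by rewrite mulNyr gtr0_sg ?invr_gt0 // mul1e.
Qed.

Lemma dle_smul x y G : 0 <= x -> x <= y -> D_distF G ->
  D_dle (D_smul y G) (D_smul x G).
Proof.
rewrite le_eqVlt => /predU1P[<-|x0] xy dG.
  by rewrite smul0; apply/dle_eps0/distF_smul.
have y0 : 0 < y by exact: lt_le_trans xy.
move=> z; rewrite !smulE //; have [z0|z0] := leP z 0%E.
  have zc a : 0 < a -> (z * (a^-1)%:E <= 0)%E.
    by move=> a0; rewrite -(mul0e (a^-1)%:E) lee_wpmul2r // lee_fin invr_ge0 ltW.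
  by rewrite !distF_nonpos // zc.
by apply: distF_le => //; apply: lee_wpmul2l; [exact: ltW | rewrite lee_fin lef_pV2].
Qed.

End Delta.

Section TriangleFunction.
Variable R : realType.
Local Notation dist := (\bar R -> R).
Variable tau : dist -> dist -> dist.
Hypothesis htau : D_triangle_function tau.
Implicit Types F G H : dist.

Lemma distF_tau F G : D_distF F -> D_distF G -> D_distF (tau F G).
Proof. by case: htau => + *; apply. Qed.

Lemma tauC F G : D_distF F -> D_distF G -> tau F G = tau G F.
Proof. by case: htau => _ + *; apply. Qed.

Lemma tauA F G H : D_distF F -> D_distF G -> D_distF H ->
  tau F (tau G H) = tau (tau F G) H.
Proof. by case: htau => _ _ + *; apply. Qed.

Lemma tau_eps0r F : D_distF F -> tau F (D_eps 0) = F.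
Proof. by case: htau => _ _ _ _ + *; apply. Qed.

Lemma tau_eps0l F : D_distF F -> tau (D_eps 0) F = F.
Proof. by move=> dF; rewrite tauC ?tau_eps0r //; exact: distF_eps0. Qed.

Lemma dle_tau F G F' G' : D_distF F -> D_distF G -> D_distF F' -> D_distF G' ->
  D_dle F F' -> D_dle G G' -> D_dle (tau F G) (tau F' G').
Proof.
case: htau => _ _ _ mono _ dF dG dF' dG' FF' GG'.
apply: (@dle_trans _ _ (tau F' G)); first exact: (mono F F' G dF dF' dG FF').1.
exact: (mono G G' F' dG dG' dF' GG').2.
Qed.

Lemma tauACA F G F' G' : D_distF F -> D_distF G -> D_distF F' -> D_distF G' ->
  tau (tau F G) (tau F' G') = tau (tau F F') (tau G G').
Proof.
move=> dF dG dF' dG'.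
have dFG' : D_distF (tau F' G') by exact: distF_tau.
rewrite -[LHS]tauA // [tau G (tau F' G')]tauA // [tau G F']tauC //.
by rewrite -tauA // tauA //; exact: distF_tau.
Qed.

End TriangleFunction.

Lemma sigma_ring_setring (T : Type) (G : set (set T)) : sigma_ring G -> setring G.
Proof.
case=> G0 GD GU; split=> // A B GA GB; rewrite -bigcup2E.
by apply: GU => -[|[|n]].
Qed.

Section SimpleFunction.
Variable R : realType.
Variables (Omega : Type) (Sigma : set (set Omega)).
Hypothesis ringS : setring Sigma.
Local Notation cells := (seq (R * set Omega)).
Local Notation rep := (@D_simple_rep R Omega Sigma).
Local Notation eval := (@D_simple_eval R Omega).
Implicit Types (p : R * set Omega) (s t : cells) (A B : set Omega).

Lemma Sigma_set0 : Sigma set0. Proof. by case: ringS. Qed.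

Lemma Sigma_setU A B : Sigma A -> Sigma B -> Sigma (A `|` B).
Proof. by case: ringS => _ + _; apply. Qed.

Lemma Sigma_setD A B : Sigma A -> Sigma B -> Sigma (A `\` B).
Proof. by case: ringS => _ _; apply. Qed.

Lemma Sigma_setI A B : Sigma A -> Sigma B -> Sigma (A `&` B).
Proof. by case: ringS => _ _ /setD_closedP[+ _]; apply. Qed.

Fixpoint cover s : set Omega := if s is p :: s' then p.2 `|` cover s' else set0.

Lemma coverP s w :
  cover s w <-> exists2 j, (j < size s)%N & (nth (0, set0) s j).2 w.
Proof.
elim: s => [|p s IH] /=; first by split=> [|[]].
split=> [[pw|/IH[j js sj]]|[[|j] js sj]]; first by exists 0%N.
- by exists j.+1.
- by left.
- by right; apply/IH; exists j.
Qed.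

Lemma D_simple_rep_nil : rep [::].
Proof. by split=> // i j. Qed.

Lemma D_simple_rep_cons p s : rep (p :: s) <->
  [/\ 0 <= p.1, Sigma p.2, p.2 `&` cover s = set0 & rep s].
Proof.
split=> [[ge0 meas disj]|[p0 pS pD [ge0 meas disj]]].
  split; first exact/ge0/mem_head.
  - exact/meas/mem_head.
  - rewrite -subset0 => w [pw /coverP[j js sj]].
    by rewrite -(disj 0%N j.+1) //=.
  - split=> [q qs|q qs|i j i_s j_s ij]; first exact/ge0/mem_behead.
    + exact/meas/mem_behead.
    + exact: (disj i.+1 j.+1).
have headD j : (j < size s)%N -> p.2 `&` (nth (0, set0) s j).2 = set0.
  move=> js; rewrite -subset0 => w [pw sw].
  by rewrite -pD; split => //; apply/coverP; exists j.
split=> [q|q|[|i] [|j] //= i_s j_s ij].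
- by rewrite inE => /predU1P[->|/ge0].
- by rewrite inE => /predU1P[->|/meas].
- exact: headD.
- by rewrite setIC; apply: headD.
- exact: disj.
Qed.

Lemma Sigma_cover s : rep s -> Sigma (cover s).
Proof.
elim: s => [|p s IH] /=; first by move=> _; exact: Sigma_set0.
by case/D_simple_rep_cons => _ pS _ /IH; apply: Sigma_setU.
Qed.

Lemma simple_eval_nil w : eval [::] w = 0.
Proof. by rewrite /D_simple_eval big_nil. Qed.

Lemma simple_eval_cons p s w : eval (p :: s) w = p.1 * \1_(p.2) w + eval s w.
Proof. by rewrite /D_simple_eval big_cons. Qed.

Lemma simple_eval_cons_in p s w : p.2 w -> eval (p :: s) w = p.1 + eval s w.
Proof. by move=> pw; rewrite simple_eval_cons indicE mem_set // mulr1. Qed.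

Lemma simple_eval_cons_out p s w : ~ p.2 w -> eval (p :: s) w = eval s w.
Proof. by move=> pw; rewrite simple_eval_cons indicE memNset // mulr0 add0r. Qed.

Lemma simple_eval_out s w : ~ cover s w -> eval s w = 0.
Proof.
elim: s => [|p s IH] /= sw; first exact: simple_eval_nil.
by rewrite simple_eval_cons_out ?IH // => ?; apply: sw; [right|left].
Qed.

Lemma simple_eval_head p s w : rep (p :: s) -> p.2 w -> eval (p :: s) w = p.1.
Proof.
case/D_simple_rep_cons => _ _ pD _ pw; rewrite simple_eval_cons_in //.
by rewrite simple_eval_out ?addr0 // => sw; rewrite -[False]/(set0 w) -pD.
Qed.

Lemma simple_eval_ge0 s w : rep s -> 0 <= eval s w.
Proof.
elim: s => [|p s IH] /=; first by rewrite simple_eval_nil.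
case/D_simple_rep_cons => p0 _ _ rs.
by rewrite simple_eval_cons addr_ge0 ?IH // mulr_ge0 // indicE ler0n.
Qed.

Definition cells_maxI s y B : cells := [seq (Num.max p.1 y, p.2 `&` B) | p <- s].

Definition cells_setD s B : cells := [seq (p.1, p.2 `\` B) | p <- s].

(* On the cell [q.2] of [t], the pointwise maximum is [q.1] outside [cover s]
   and [max p.1 q.1] on each cell [p.2] of [s]; the rest of [s] is joined with
   the rest of [t]. *)
Fixpoint cells_join s t {struct t} : cells :=
  if t is q :: t' then
    (q.1, q.2 `\` cover s) :: cells_maxI s q.1 q.2 ++
      cells_join (cells_setD s q.2) t'
  else s.

Lemma cover_cat s t : cover (s ++ t) = cover s `|` cover t.
Proof. by elim: s => [|p s IH] /=; rewrite ?set0U // IH setUA. Qed.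

Lemma cover_maxI s y B : cover (cells_maxI s y B) = cover s `&` B.
Proof. by elim: s => [|p s IH] /=; rewrite ?set0I // IH setIUl. Qed.

Lemma cover_setD s B : cover (cells_setD s B) = cover s `\` B.
Proof. by elim: s => [|p s IH] /=; rewrite ?set0D // IH setDUl. Qed.

Lemma cover_join s t : cover (cells_join s t) `<=` cover s `|` cover t.
Proof.
elim: t s => [|q t IH] s /=; first by move=> w; left.
move=> w [[qw _]|]; first by right; left.
rewrite cover_cat cover_maxI => -[[sw _]|/IH]; first by left.
by rewrite cover_setD => -[[sw _]|tw]; [left | right; right].
Qed.

Lemma D_simple_rep_cat s t : rep s -> rep t -> cover s `&` cover t = set0 ->
  rep (s ++ t).
Proof.
elim: s => [|p s IH] //= /D_simple_rep_cons[p0 pS pD rs] rt st.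
apply/D_simple_rep_cons; split => //.
- rewrite cover_cat setIUr pD set0U.
  by apply: subsetI_eq0 st => // w pw; left.
- by apply: IH => //; apply: subsetI_eq0 st => // w sw; right.
Qed.

Lemma D_simple_rep_maxI s y B : Sigma B -> 0 <= y -> rep s ->
  rep (cells_maxI s y B).
Proof.
move=> BS y0; elim: s => [|p s IH] /= => [_|/D_simple_rep_cons[p0 pS pD rs]].
  exact: D_simple_rep_nil.
apply/D_simple_rep_cons; split; first by rewrite le_max p0.
- exact: Sigma_setI.
- by rewrite cover_maxI; apply: subsetI_eq0 pD => w [].
- exact: IH.
Qed.

Lemma D_simple_rep_setD s B : Sigma B -> rep s -> rep (cells_setD s B).
Proof.
move=> BS; elim: s => [|p s IH] /= => [_|/D_simple_rep_cons[p0 pS pD rs]].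
  exact: D_simple_rep_nil.
apply/D_simple_rep_cons; split => //.
- exact: Sigma_setD.
- by rewrite cover_setD; apply: subsetI_eq0 pD => w [].
- exact: IH.
Qed.

Lemma D_simple_rep_join s t : rep s -> rep t -> rep (cells_join s t).
Proof.
elim: t s => [|q t IH] s //= rs /D_simple_rep_cons[q0 qS qD rt].
apply/D_simple_rep_cons; split => //.
- exact/Sigma_setD/Sigma_cover.
- rewrite cover_cat cover_maxI -subset0 => w [[qw sw] [[]//|/cover_join]].
  by rewrite cover_setD -qD => -[[]//|tw].
- apply: D_simple_rep_cat.
  + exact: D_simple_rep_maxI.
  + by apply: IH => //; apply: D_simple_rep_setD.
  + rewrite cover_maxI -subset0 => w [[_ qw] /cover_join].
    by rewrite cover_setD -qD => -[[]//|tw].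
Qed.

Lemma simple_eval_cat s t w : eval (s ++ t) w = eval s w + eval t w.
Proof. by rewrite /D_simple_eval big_cat. Qed.

Lemma simple_eval_maxI s y B w : rep s ->
  eval (cells_maxI s y B) w =
    if `[< B w /\ cover s w >] then Num.max (eval s w) y else 0.
Proof.
elim: s => [|p s IH] /= rps.
  by rewrite simple_eval_nil; case: asboolP => // -[_ []].
have /D_simple_rep_cons[_ _ pD rs] := rps.
have [pw|npw] := pselect (p.2 w); last first.
  have npB : ~ (p.2 `&` B) w by case.
  rewrite (@simple_eval_cons_out (_, _) _ w npB) (simple_eval_cons_out s npw) IH //.
  congr (if _ then _ else _); apply/asbool_equiv_eq.
  by split=> -[Bw sw]; split=> //; [right | case: sw].
have sw : ~ cover s w by move=> sw; rewrite -[False]/(set0 w) -pD.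
have e : eval (cells_maxI s y B) w = 0.
  by rewrite IH // asboolF // => -[].
rewrite (simple_eval_head rps pw).
have [Bw|nBw] := pselect (B w).
  by rewrite simple_eval_cons_in // e addr0 asboolT //; split => //; left.
by rewrite simple_eval_cons_out /= ?e ?asboolF // => -[].
Qed.

Lemma simple_eval_setD s B w :
  eval (cells_setD s B) w = if `[< B w >] then 0 else eval s w.
Proof.
elim: s => [|p s IH] /=; first by rewrite !simple_eval_nil; case: ifP.
rewrite !simple_eval_cons IH /=; case: asboolP => Bw.
  by rewrite indicE memNset ?mulr0 ?add0r // => -[].
congr (_ * _ + _); rewrite !indicE.
have [pw|npw] := pselect (p.2 w); first by rewrite !mem_set.
by rewrite !memNset // => -[].
Qed.

Lemma simple_eval_join s t w : rep s -> rep t ->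
  eval (cells_join s t) w = Num.max (eval s w) (eval t w).
Proof.
elim: t s => [|q t IH] s /= rs.
  by move=> _; rewrite simple_eval_nil max_l // simple_eval_ge0.
move=> /[dup] rqt /D_simple_rep_cons[q0 qS qD rt].
rewrite simple_eval_cons simple_eval_cat IH; last 2 first.
- exact: D_simple_rep_setD.
- exact: rt.
rewrite simple_eval_maxI // simple_eval_setD.
have [qw|nqw] := pselect (q.2 w); last first.
  have nqs : ~ (q.2 w /\ cover s w) by case.
  rewrite (simple_eval_cons_out t nqw) (asboolF nqw) (asboolF nqs).
  by rewrite indicE memNset ?mulr0 ?add0r // => -[].
have tw : eval t w = 0.
  by apply: simple_eval_out => tw; rewrite -[False]/(set0 w) -qD.
rewrite (simple_eval_head rqt qw) (asboolT qw) tw maxxx addr0.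
have [sw|nsw] := pselect (cover s w).
  by rewrite asboolT // indicE memNset ?mulr0 ?add0r // => -[].
have nqs : ~ (q.2 w /\ cover s w) by case.
by rewrite (asboolF nqs) indicE mem_set //= mulr1 addr0 (simple_eval_out nsw) max_r.
Qed.

Definition cells_bigjoin (F : nat -> cells) (js : seq nat) : cells :=
  foldr (fun j acc => cells_join (F j) acc) [::] js.

Lemma D_simple_rep_bigjoin F js : (forall j, rep (F j)) -> rep (cells_bigjoin F js).
Proof.
move=> rF; elim: js => [|j js IH] /=; first exact: D_simple_rep_nil.
exact: D_simple_rep_join.
Qed.

Lemma simple_eval_bigjoin F js w : (forall j, rep (F j)) ->
  eval (cells_bigjoin F js) w = \big[Num.max/0]_(j <- js) eval (F j) w.
Proof.
move=> rF; elim: js => [|j js IH] /=; first by rewrite big_nil simple_eval_nil.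
by rewrite big_cons simple_eval_join ?IH //; exact: D_simple_rep_bigjoin.
Qed.

End SimpleFunction.

Section SimpleIntegral.
Variable R : realType.
Local Notation dist := (\bar R -> R).
Variables (Omega : Type) (tau : dist -> dist -> dist) (Sigma : set (set Omega)).
Hypothesis htau : D_triangle_function tau.
Hypothesis hdistr : D_tau_distributive tau.
Hypothesis ringS : setring Sigma.
Local Notation rep := (@D_simple_rep R Omega Sigma).
Local Notation eval := (@D_simple_eval R Omega).
Local Notation SI := (D_simple_integral tau).
Local Notation dec := (D_decomposable tau Sigma).
Implicit Types (p : R * set Omega) (s t : seq (R * set Omega)).
Implicit Types (A B D : set Omega).

Lemma distF_decomp g A : dec g -> Sigma A -> D_distF (g A).
Proof. by case=> + _ _; apply. Qed.

Lemma decomp0 g : dec g -> g set0 = D_eps 0.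
Proof. by case. Qed.

Lemma decomp_split g D A : dec g -> Sigma D -> Sigma A ->
  g D = tau (g (D `&` A)) (g (D `\` A)).
Proof.
case=> _ _ gU DS AS; rewrite -gU ?setUIDK //; first exact: Sigma_setI.
- exact: Sigma_setD.
- by rewrite -subset0 => w [[_ Aw] []].
Qed.

Lemma D_decomposable_msum g1 g2 : dec g1 -> dec g2 -> dec (D_msum tau g1 g2).
Proof.
move=> d1 d2; split=> [A AS||E F ES FS EF]; rewrite /D_msum.
- by apply: distF_tau => //; exact: distF_decomp.
- by rewrite !decomp0 // tau_eps0r //; exact: distF_eps0.
have := distF_decomp d1 ES; have := distF_decomp d1 FS.
have := distF_decomp d2 ES; have := distF_decomp d2 FS.
by case: d1 d2 => [_ _ ->] // [_ _ ->] // *; rewrite tauACA.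
Qed.

Lemma distF_smul_decomp g A c : dec g -> Sigma A -> 0 <= c ->
  D_distF (D_smul c (g A)).
Proof. by move=> dg AS c0; apply/distF_smul/distF_decomp. Qed.

Lemma distF_simple_integral g E s : dec g -> Sigma E -> rep s ->
  D_distF (SI g E s).
Proof.
move=> dg ES; elim: s => [|p s IH] /=; first by move=> _; exact: distF_eps0.
case/D_simple_rep_cons => p0 pS _ /IH sI.
by apply: distF_tau => //; apply: distF_smul_decomp => //; exact: Sigma_setI.
Qed.

Lemma simple_integral_split g E F s : dec g -> Sigma E -> Sigma F -> rep s ->
  SI g E s = tau (SI g (E `&` F) s) (SI g (E `\` F) s).
Proof.
move=> dg ES FS; elim: s => [|p s IH] /=.
  by move=> _; rewrite tau_eps0r //; exact: distF_eps0.
case/D_simple_rep_cons => p0 pS _ rs.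
have EpS : Sigma (E `&` p.2) := Sigma_setI ringS ES pS.
have dI := distF_simple_integral dg (Sigma_setI ringS ES FS) rs.
have dD := distF_simple_integral dg (Sigma_setD ringS ES FS) rs.
have dpI := distF_decomp dg (Sigma_setI ringS EpS FS).
have dpD := distF_decomp dg (Sigma_setD ringS EpS FS).
rewrite (decomp_split dg EpS FS) hdistr // IH // tauACA //; try exact: distF_smul.
have -> : E `&` p.2 `\` F = (E `\` F) `&` p.2 by rewrite !setDE setIAC.
by rewrite setIAC.
Qed.

Lemma simple_integral_eps0 g E s : dec g -> rep s -> E `&` cover s = set0 ->
  SI g E s = D_eps 0.
Proof.
move=> dg; elim: s => [|p s IH] //= /D_simple_rep_cons[p0 pS _ rs].
rewrite setIUr setU_eq0 => -[-> /IH ->] //.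
by rewrite decomp0 // smul_eps0 // tau_eps0r //; exact: distF_eps0.
Qed.

Lemma simple_integral_msum g1 g2 E s : dec g1 -> dec g2 -> Sigma E -> rep s ->
  SI (D_msum tau g1 g2) E s = tau (SI g1 E s) (SI g2 E s).
Proof.
move=> d1 d2 ES; elim: s => [|p s IH] /=.
  by move=> _; rewrite tau_eps0r //; exact: distF_eps0.
case/D_simple_rep_cons => p0 pS _ rs.
have EpS : Sigma (E `&` p.2) := Sigma_setI ringS ES pS.
have := distF_simple_integral d1 ES rs; have := distF_simple_integral d2 ES rs.
have := distF_smul_decomp d1 EpS p0; have := distF_smul_decomp d2 EpS p0.
have := distF_decomp d1 EpS; have := distF_decomp d2 EpS.
by move=> *; rewrite IH // /D_msum hdistr // tauACA.
Qed.

Lemma simple_integral_cons_sub g D p s : dec g -> Sigma D -> rep (p :: s) ->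
  D `<=` p.2 -> SI g D (p :: s) = D_smul p.1 (g D).
Proof.
move=> dg DS /D_simple_rep_cons[p0 pS pD rs] Dp.
rewrite /= (setIidl Dp) simple_integral_eps0 //; last exact: subsetI_eq0 pD.
by rewrite tau_eps0r //; exact: distF_smul_decomp.
Qed.

Lemma simple_integral_cons_disj g D p s : dec g -> Sigma D -> rep (p :: s) ->
  D `&` p.2 = set0 -> SI g D (p :: s) = SI g D s.
Proof.
move=> dg DS /D_simple_rep_cons[p0 pS pD rs] Dp.
rewrite /= Dp decomp0 // smul_eps0 // tau_eps0l //.
exact: distF_simple_integral.
Qed.

Lemma dle_smul_simple_integral g D s y : dec g -> Sigma D -> rep s -> 0 <= y ->
  (forall w, D w -> eval s w <= y) -> D_dle (D_smul y (g D)) (SI g D s).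
Proof.
move=> dg; elim: s D => [|p s IH] D DS rs y0 sy.
  by apply/dle_eps0/distF_smul_decomp.
have /D_simple_rep_cons[p0 pS _ rs'] := rs.
have DIS := Sigma_setI ringS DS pS; have DDS := Sigma_setD ringS DS pS.
rewrite (simple_integral_split dg DS pS rs) (decomp_split dg DS pS) hdistr //;
  try exact: distF_decomp.
rewrite simple_integral_cons_sub // simple_integral_cons_disj ?setDKI //.
apply: dle_tau => //; do ?[exact: distF_smul_decomp | exact: distF_simple_integral].
- have [->|/set0P[w [Dw pw]]] := eqVneq (D `&` p.2) set0.
    by rewrite decomp0 // !smul_eps0.
  apply: dle_smul (distF_decomp dg DIS) => //.
  by apply: le_trans (sy w Dw); rewrite (simple_eval_head rs pw).
- by apply: IH => // w [Dw pw]; rewrite -(simple_eval_cons_out s pw); exact: sy.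
Qed.

Lemma simple_integral_antitone g E s t : dec g -> Sigma E -> rep s -> rep t ->
  (forall w, E w -> eval s w <= eval t w) -> D_dle (SI g E t) (SI g E s).
Proof.
move=> dg + rs; elim: t E => [|q t IH] E ES rt st.
  rewrite /= -(smul0 (g E)); apply: dle_smul_simple_integral => // w /st.
  by rewrite simple_eval_nil.
have /D_simple_rep_cons[q0 qS _ rt'] := rt.
have EIS := Sigma_setI ringS ES qS; have EDS := Sigma_setD ringS ES qS.
rewrite (simple_integral_split dg ES qS rt) (simple_integral_split dg ES qS rs).
rewrite simple_integral_cons_sub // simple_integral_cons_disj ?setDKI //.
apply: dle_tau => //; do ?[exact: distF_smul_decomp | exact: distF_simple_integral].
- apply: dle_smul_simple_integral => // w [Ew qw].
  by rewrite -(simple_eval_head rt qw); exact: st.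
- by apply: IH => // w [Ew qw]; rewrite -(simple_eval_cons_out t qw); exact: st.
Qed.

End SimpleIntegral.

Section DeltaInfimum.
Variable R : realType.
Local Notation dist := (\bar R -> R).
Variable S : set dist.
Hypothesis distF_S : forall G, S G -> D_distF G.
Hypothesis S_neq0 : exists G, S G.

Definition dinf_at (y : R) : R := inf [set G y%:E | G in S].

(* The pointwise infimum need not be left-continuous: [dinf] is its
   left-continuous regularisation. *)
Definition dinf (x : \bar R) : R :=
  match x with
  | r%:E => sup [set dinf_at y | y in [set y | y < r]]
  | +oo%E => 1
  | -oo%E => 0
  end.

Lemma dinf_at_set_neq0 y : [set G y%:E | G in S] !=set0.
Proof. by case: S_neq0 => G SG; exists (G y%:E), G. Qed.

Lemma has_inf_dinf_at_set y : has_inf [set G y%:E | G in S].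
Proof.
split; first exact: dinf_at_set_neq0.
by exists 0 => _ [G SG <-]; exact/distF_ge0/distF_S.
Qed.

Lemma dinf_at_le G y : S G -> dinf_at y <= G y%:E.
Proof. by move=> SG; apply: (ge_inf (has_inf_dinf_at_set y).2); exists G. Qed.

Lemma dinf_at_ge0 y : 0 <= dinf_at y.
Proof.
apply: lb_le_inf; first exact: dinf_at_set_neq0.
by move=> _ [G SG <-]; exact/distF_ge0/distF_S.
Qed.

Lemma dinf_at_le1 y : dinf_at y <= 1.
Proof.
by case: S_neq0 => G SG; apply: le_trans (dinf_at_le y SG) (distF_le1 _ (distF_S SG)).
Qed.

Lemma dinf_at_nonpos y : y <= 0 -> dinf_at y = 0.
Proof.
move=> y0; apply/eqP; rewrite eq_le dinf_at_ge0 andbT.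
case: S_neq0 => G SG; apply: le_trans (dinf_at_le y SG) _.
by rewrite distF_nonpos ?lee_fin //; exact: distF_S.
Qed.

Lemma has_sup_dinf_set r : has_sup [set dinf_at y | y in [set y | y < r]].
Proof.
split; first by exists (dinf_at (r - 1)), (r - 1) => //=; rewrite ltrBlDr ltrDl.
by exists 1 => _ [y _ <-]; exact: dinf_at_le1.
Qed.

Lemma dinf_at_le_dinf y r : y < r -> dinf_at y <= dinf r%:E.
Proof. by move=> yr; apply: (sup_upper_bound (has_sup_dinf_set r)); exists y. Qed.

Lemma dinf_le r c : (forall y, y < r -> dinf_at y <= c) -> dinf r%:E <= c.
Proof.
move=> yc; apply: ge_sup; first by case: (has_sup_dinf_set r).
by move=> _ [y yr <-]; exact: yc.
Qed.

Lemma dinf_le_at r : dinf r%:E <= dinf_at r.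
Proof.
apply: dinf_le => y yr; apply: lb_le_inf; first exact: dinf_at_set_neq0.
move=> _ [G SG <-]; apply: le_trans (dinf_at_le y SG) _.
by apply: distF_le; [exact: distF_S | rewrite lee_fin ltW].
Qed.

Lemma distF_dinf : D_distF dinf.
Proof.
have dinf_ge0 r : 0 <= dinf r%:E.
  by apply: le_trans (dinf_at_ge0 (r - 1)) (dinf_at_le_dinf _); rewrite ltrBlDr ltrDl.
have dinf_le1 r : dinf r%:E <= 1 by apply: dinf_le => y _; exact: dinf_at_le1.
split.
- by case=> [r||] /=; rewrite ?dinf_ge0 ?dinf_le1 ?lexx ?ler01.
- case=> [r||] [r'||] //=; rewrite ?dinf_ge0 ?dinf_le1 ?ler01 //.
  rewrite lee_fin => rr; apply: dinf_le => y yr; apply: dinf_at_le_dinf.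
  exact: lt_le_trans rr.
- move=> r; apply/cvgrPdist_lt => e e0.
  have [_ [y yr <-] ye] := sup_adherent e0 (has_sup_dinf_set r).
  near=> t.
  have yt : y < t by near: t; apply: nbhs_left_gt.
  have tr : t < r by near: t; apply: nbhs_left_lt.
  have h1 : dinf_at y <= dinf t%:E by exact: dinf_at_le_dinf.
  have h2 : dinf t%:E <= dinf r%:E.
    by apply: dinf_le => z zt; apply: dinf_at_le_dinf; exact: lt_trans tr.
  rewrite ger0_norm ?subr_ge0 //.
  by rewrite ltrBlDr -ltrBlDl; apply: lt_le_trans h1.
- case=> [r||] //= r0; apply/eqP; rewrite eq_le dinf_ge0 andbT.
  apply: dinf_le => y yr; rewrite dinf_at_nonpos //.
  by apply: ltW; apply: lt_le_trans yr _.
- by [].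
Unshelve. all: by end_near. Qed.

Lemma dinf_lb G : S G -> D_dle dinf G.
Proof.
move=> SG; have dG := distF_S SG.
case=> [r||] /=; last exact: distF_ge0.
- exact: le_trans (dinf_le_at r) (dinf_at_le r SG).
- by rewrite distF_pinfty.
Qed.

Lemma dinf_greatest K : D_distF K -> (forall G, S G -> D_dle K G) -> D_dle K dinf.
Proof.
move=> dK lbK; case=> [r||] /=; last 2 first.
- by rewrite distF_pinfty.
- by rewrite distF_nonpos // leNye.
rewrite leNgt; apply/negP => Kr.
have d0 : 0 < K r%:E - dinf r%:E by rewrite subr_gt0.
(* left continuity of [K] at [r] gives some [t < r] with [dinf r < K t] *)
have [t [tr Kt]] : exists t, t < r /\ `|K r%:E - K t%:E| < K r%:E - dinf r%:E.
  apply: (@filter_ex _ (r^'-)); near=> t; split.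
    by near: t; apply: nbhs_left_lt.
  by near: t; move/cvgrPdist_lt: (@distF_cvg_left R K r dK) => /(_ _ d0).
have : K t%:E <= dinf r%:E.
  apply: le_trans (dinf_at_le_dinf tr).
  apply: lb_le_inf; first exact: dinf_at_set_neq0.
  by move=> _ [G SG <-]; apply: lbK.
move: Kt; rewrite ltr_norml => /andP[_]; rewrite ltrBlDr -ltrBlDl opprB addrCA.
by rewrite subrr addr0 ltNge => /negbTE ->.
Unshelve. all: by end_near. Qed.

Lemma dinf_is_dinf : D_is_dinf S dinf.
Proof. by split; [exact: distF_dinf | exact: dinf_lb | exact: dinf_greatest]. Qed.

Lemma D_is_dinf_unique I : D_is_dinf S I -> I = dinf.
Proof.
case=> dI lbI gI; apply: dle_anti; first exact: dinf_greatest.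
by apply: gI; [exact: distF_dinf | exact: dinf_lb].
Qed.

Lemma dinf_approx q q' e : q < q' -> 0 < e ->
  exists2 G, S G & G q%:E < dinf q'%:E + e.
Proof.
move=> qq e0; have [_ [G SG <-] Ge] := inf_adherent e0 (has_inf_dinf_at_set q).
by exists G => //; apply: lt_le_trans Ge _; rewrite lerD2r dinf_at_le_dinf.
Qed.

End DeltaInfimum.

Section ContinuityPoints.
Variable R : realType.

(* The discontinuities of a monotone function are countable, while a
   nonempty open interval has positive Lebesgue measure. *)
Lemma nondecreasing_continuity_point (f : R -> R) a b :
  {homo f : x y / x <= y} -> a < b ->
  exists2 z, a < z < b & {for z, continuous f}.
Proof.
move=> ndf ab.
have [x [xab ndx]] : exists x, (x \in `]a, b[) /\ ~ discontinuity f x.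
  apply: contrapT => allD.
  have sub : `]a, b[ `<=` [set x | (x \in `]a, b[) /\ discontinuity f x].
    move=> x xab; split; first by rewrite inE.
    by apply: contrapT => nd; apply: allD; exists x; rewrite inE.
  have cD := @discontinuity_countable R a b f (fun x y _ _ => ndf x y).
  have mD : measurable [set x | (x \in `]a, b[) /\ discontinuity f x].
    by apply: countable_measurable => // t; exact: measurable_set1.
  have := @le_measure _ _ _ (@lebesgue_measure R) `]a, b[%classic
    [set x | (x \in `]a, b[) /\ discontinuity f x].
  rewrite !inE => /(_ (measurable_itv _) mD sub) mu_le.
  have : (lebesgue_measure (`]a, b[%classic : set R) <= 0)%E.
    apply: le_trans mu_le _.
    by have /eqP := countable_lebesgue_measure0 cD; rewrite eq_le => /andP[].
  rewrite lebesgue_measure_itv /= lte_fin ab.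
  by rewrite -EFinB lee_fin subr_le0 leNgt ab.
move: xab; rewrite in_itv /= => /andP[ax xb].
exists x; first by rewrite ax xb.
have cl : cvg (f y @[y --> x^'-]).
  apply: nondecreasing_at_left_is_cvgr; first by near=> t => u v _ _; exact: ndf.
  near=> t; exists (f x) => _ [u + <-]; rewrite /= in_itv /= => /andP[_ /ltW ux].
  exact: ndf.
have cr : cvg (f y @[y --> x^'+]).
  apply: nondecreasing_at_right_is_cvgr; first by near=> t => u v _ _; exact: ndf.
  near=> t; exists (f x) => _ [u + <-]; rewrite /= in_itv /= => /andP[/ltW xu _].
  exact: ndf.
have l1 : lim (f y @[y --> x^'-]) <= f x.
  apply: limr_le => //; near=> t; apply/ndf/ltW.
  by near: t; apply: nbhs_left_lt.
have l2 : f x <= lim (f y @[y --> x^'+]).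
  apply: limr_ge => //; near=> t; apply/ndf/ltW.
  by near: t; apply: nbhs_right_gt.
have eqlr : lim (f y @[y --> x^'-]) = lim (f y @[y --> x^'+]).
  by apply/eqP; apply: contrapT => ne; apply: ndx; split => //; apply/negP.
have limlE : lim (f y @[y --> x^'-]) = f x by apply/eqP; rewrite eq_le l1 eqlr l2.
have limrE : lim (f y @[y --> x^'+]) = f x by rewrite -eqlr.
by apply/left_right_continuousP; split; [rewrite -limlE | rewrite -limrE].
Unshelve. all: by end_near. Qed.

Lemma dle_continuity_points (F G : \bar R -> R) : D_distF F -> D_distF G ->
  (forall z : R, {for z, continuous (fun y : R => G y%:E)} -> F z%:E <= G z%:E) ->
  D_dle F G.
Proof.
move=> dF dG FG; case=> [r||]; last 2 first.
- by rewrite !distF_pinfty.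
- by rewrite distF_nonpos ?leNye //; exact: distF_ge0.
have ndG : {homo (fun y : R => G y%:E) : x y / x <= y}.
  by move=> x y xy; apply: distF_le; rewrite ?lee_fin.
have lt_r n : r - n.+1%:R^-1 < r by rewrite ltrBlDl ltrDr invr_gt0.
have cont_pt n : exists z, r - n.+1%:R^-1 < z < r /\
    {for z, continuous (fun y : R => G y%:E)}.
  by have [z] := nondecreasing_continuity_point ndG (lt_r n); exists z.
have [u uP] := choice _ cont_pt.
have ur n : u n < r by case: (uP n) => /andP[].
have u_cvg : u n @[n --> \oo] --> r.
  apply: (@squeeze_cvgr _ _ _ _ (fun n => r - n.+1%:R^-1) (fun=> r)).
  - by near=> n; case: (uP n) => /andP[rn nr] _; rewrite !ltW.
  - rewrite -[X in _ --> X]subr0.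
    by apply: cvgB; [exact: cvg_cst | exact: cvg_harmonic].
  - exact: cvg_cst.
have Fu_cvg := proj1 (cvg_at_leftP (fun y => F y%:E) r _) (distF_cvg_left dF) u
  (conj ur u_cvg).
apply: (ler_cvg_to Fu_cvg (cvg_cst (G r%:E))); near=> n.
apply: le_trans (FG _ (uP n).2) _.
by apply: distF_le; rewrite // lee_fin ltW.
Unshelve. all: by end_near. Qed.

End ContinuityPoints.

Section GridApproximation.
Variable R : realType.
Local Notation dist := (\bar R -> R).

Definition grid (n j : nat) : R := j%:R / n.+1%:R.

Definition mesh (n : nat) : R := n.+1%:R^-1.

Lemma mesh_gt0 n : 0 < mesh n.
Proof. by rewrite invr_gt0 ltr0Sn. Qed.

(* The grid points [j / n.+1], [j <= n.+1 ^ 2], cover [0, n.+1] with mesh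
   [1 / n.+1]. *)
Lemma dcvg_grid (H : dist) (K : nat -> dist) :
  D_distF H -> (forall n, D_distF (K n)) -> (forall n, D_dle H (K n)) ->
  (forall n j, (j <= n.+1 ^ 2)%N ->
     K n (grid n j)%:E <= H (grid n j + mesh n)%:E + mesh n) ->
  D_dcvg K H.
Proof.
move=> dH dK HK Kgrid x Hx.
have [x0|x0] := leP x 0.
  have -> : (fun n => K n x%:E) = fun=> H x%:E.
    by apply: funext => n; rewrite !distF_nonpos ?lee_fin.
  exact: cvg_cst.
have mesh_cvg : mesh n @[n --> \oo] --> 0 by exact: cvg_harmonic.
apply: (@squeeze_cvgr _ _ _ _ (fun=> H x%:E)
  (fun n => H (x + mesh n + mesh n)%:E + mesh n)); last 2 first.
- exact: cvg_cst.
- rewrite -[X in _ --> X]addr0; apply: cvgD => //.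
  apply: (cvg_comp (fun n => x + mesh n + mesh n) (fun y : R => H y%:E)) Hx.
  have : x + mesh n + mesh n @[n --> \oo] --> x + 0 + 0.
    by apply: cvgD => //; apply: cvgD => //; exact: cvg_cst.
  by rewrite !addr0.
near=> n; apply/andP; split; first exact: HK.
have n1_gt0 : (0 : R) < n.+1%:R by rewrite ltr0Sn.
have x_lt : x < n.+1%:R.
  rewrite -truncn_le_nat.
  by near: n; exact: nbhs_infty_ge.
have xn_ge0 : 0 <= x * n.+1%:R by rewrite mulr_ge0 // ltW.
set j := (Num.truncn (x * n.+1%:R)).+1.
have j_le : (j <= n.+1 ^ 2)%N.
  by rewrite /j truncn_lt_nat // natrX expr2 ltr_pM2r.
have x_lt_grid : x < grid n j by rewrite /grid ltr_pdivlMr // /j truncnS_gt.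
have grid_le : grid n j <= x + mesh n.
  rewrite /grid ler_pdivrMr // mulrDl /mesh mulVf ?gt_eqF // /j -natr1 lerD2r.
  by case/andP: (truncn_itv xn_ge0).
apply: le_trans (_ : K n (grid n j)%:E <= _).
  by apply: distF_le => //; rewrite lee_fin ltW.
apply: le_trans (Kgrid n j j_le) _.
by rewrite lerD2r; apply: distF_le => //; rewrite lee_fin lerD2r.
Unshelve. all: by end_near. Qed.

End GridApproximation.
Arguments grid {R} n j.
Arguments mesh {R} n.
Arguments mesh_gt0 {R} n.

Section SumOfMeasures.
Variable R : realType.
Local Notation dist := (\bar R -> R).
Variables (Omega : Type) (tau : dist -> dist -> dist) (Sigma : set (set Omega)).
Variables (E : set Omega) (f : Omega -> \bar R).
Hypothesis htau : D_triangle_function tau.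
Hypothesis hdistr : D_tau_distributive tau.
Hypothesis ringS : setring Sigma.
Hypothesis ES : Sigma E.
Hypothesis f_ge0 : forall w, (0 <= f w)%E.
Local Notation cells := (seq (R * set Omega)).
Local Notation rep := (@D_simple_rep R Omega Sigma).
Local Notation eval := (@D_simple_eval R Omega).
Local Notation SI := (D_simple_integral tau).
Local Notation dec := (D_decomposable tau Sigma).
Local Notation SS g := (D_simple_integrals tau Sigma g E f).

Definition simple_minorant (s : cells) :=
  rep s /\ forall w, E w -> ((eval s w)%:E <= f w)%E.

Lemma simple_minorant_nil : simple_minorant [::].
Proof.
by split=> [|w _]; [exact: D_simple_rep_nil | rewrite simple_eval_nil f_ge0].
Qed.

Lemma simple_minorant_bigjoin F js : (forall j, simple_minorant (F j)) ->
  simple_minorant (cells_bigjoin F js).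
Proof.
move=> mF; have rF j := (mF j).1.
split=> [|w Ew]; first exact: D_simple_rep_bigjoin.
rewrite (simple_eval_bigjoin ringS js w rF); elim/big_rec: _ => [|j x _ xf].
  exact: f_ge0.
by rewrite EFin_max ge_max xf (mF j).2.
Qed.

Lemma simple_minorant_join s t : simple_minorant s -> simple_minorant t ->
  simple_minorant (cells_join s t).
Proof.
move=> [rs sf] [rt tf]; split=> [|w Ew]; first exact: D_simple_rep_join.
by rewrite (simple_eval_join ringS _ rs rt) EFin_max ge_max sf ?tf.
Qed.

Lemma simple_integralsP g G :
  SS g G <-> exists2 s, simple_minorant s & G = SI g E s.
Proof. by split=> [[s [rs sf ->]]|[s [rs sf] ->]]; exists s. Qed.

Lemma distF_simple_integrals g : dec g -> forall G, SS g G -> D_distF G.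
Proof.
move=> dg _ /simple_integralsP[s [rs _] ->].
exact: (distF_simple_integral htau ringS dg ES rs).
Qed.

Lemma simple_integrals_neq0 g : exists G, SS g G.
Proof.
exists (SI g E [::]); apply/simple_integralsP.
by exists [::]; first exact: simple_minorant_nil.
Qed.

Lemma distF_dinf_simple_integrals g : dec g -> D_distF (dinf (SS g)).
Proof.
move=> dg.
exact: (distF_dinf (distF_simple_integrals dg) (simple_integrals_neq0 g)).
Qed.

Lemma dinf_le_simple_integral g s : dec g -> simple_minorant s ->
  D_dle (dinf (SS g)) (SI g E s).
Proof.
move=> dg ms; apply: (dinf_lb (distF_simple_integrals dg) (simple_integrals_neq0 g)).
by apply/simple_integralsP; exists s.
Qed.

Lemma dintegralE g : dec g -> D_dintegral tau Sigma g E f = dinf (SS g).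
Proof.
move=> dg; have distF_SS := distF_simple_integrals dg.
apply: (D_is_dinf_unique distF_SS (simple_integrals_neq0 g)).
rewrite /D_dintegral; apply: epsilon_spec; exists (dinf (SS g)).
exact: (dinf_is_dinf distF_SS (simple_integrals_neq0 g)).
Qed.

Lemma integrable_decomp g : dec g -> D_integrable tau Sigma g E f.
Proof.
move=> dg; exists (dinf (SS g)); split; first exact: distF_dinf_simple_integrals.
by move=> _ /simple_integralsP[s ms ->]; exact: dinf_le_simple_integral.
Qed.

Lemma grid_minorants g : dec g -> exists p : nat -> nat -> cells,
  forall n j, simple_minorant (p n j) /\
    SI g E (p n j) (grid n j)%:E < dinf (SS g) (grid n j + mesh n)%:E + mesh n.
Proof.
move=> dg; have approx (nj : nat * nat) : exists s, simple_minorant s /\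
    let: (n, j) := nj in
    SI g E s (grid n j)%:E < dinf (SS g) (grid n j + mesh n)%:E + mesh n.
  case: nj => n j; have grid_lt : grid n j < grid n j + mesh n :> R.
    by rewrite ltrDl mesh_gt0.
  have [_ /simple_integralsP[s ms ->] sG] := dinf_approx (distF_simple_integrals dg)
    (simple_integrals_neq0 g) grid_lt (mesh_gt0 n).
  by exists s.
have [p pP] := choice _ approx.
by exists (fun n j => p (n, j)) => n j; exact: pP (n, j).
Qed.

Lemma common_minorants (p1 p2 : nat -> nat -> cells) :
  (forall n j, simple_minorant (p1 n j)) -> (forall n j, simple_minorant (p2 n j)) ->
  exists T : nat -> cells, (forall n, simple_minorant (T n)) /\
    forall n j w, (j <= n.+1 ^ 2)%N ->
      eval (p1 n j) w <= eval (T n) w /\ eval (p2 n j) w <= eval (T n) w.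
Proof.
move=> p1P p2P; pose q n j := cells_join (p1 n j) (p2 n j).
have qP n j : simple_minorant (q n j) by exact: simple_minorant_join.
exists (fun n => cells_bigjoin (q n) (iota 0 (n.+1 ^ 2).+1)).
split=> [n|n j w jn]; first exact: simple_minorant_bigjoin.
have qT : eval (q n j) w <= eval (cells_bigjoin (q n) (iota 0 (n.+1 ^ 2).+1)) w.
  rewrite (simple_eval_bigjoin ringS _ w (fun j => (qP n j).1)).
  by apply: le_bigmax_seq => //; rewrite mem_iota.
have qE : eval (q n j) w = Num.max (eval (p1 n j) w) (eval (p2 n j) w).
  exact: (simple_eval_join ringS _ (p1P n j).1 (p2P n j).1).
by split; apply: le_trans qT; rewrite qE le_max lexx ?orbT.
Qed.

Lemma dcvg_simple_integrals g p (T : nat -> cells) : dec g ->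
  (forall n j, simple_minorant (p n j) /\
    SI g E (p n j) (grid n j)%:E < dinf (SS g) (grid n j + mesh n)%:E + mesh n) ->
  (forall n, simple_minorant (T n)) ->
  (forall n j w, (j <= n.+1 ^ 2)%N -> eval (p n j) w <= eval (T n) w) ->
  D_dcvg (fun n => SI g E (T n)) (dinf (SS g)).
Proof.
move=> dg pP TP pT.
apply: dcvg_grid => [|n|n|n j jn]; first exact: distF_dinf_simple_integrals.
- exact: (distF_simple_integral htau ringS dg ES (TP n).1).
- exact: dinf_le_simple_integral.
apply: ltW; apply: le_lt_trans (pP n j).2.
apply: (simple_integral_antitone htau hdistr ringS dg ES (pP n j).1.1 (TP n).1).
by move=> w _; exact: pT.
Qed.

Section Sum.
Variables g1 g2 : set Omega -> \bar R -> R.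
Hypotheses (d1 : dec g1) (d2 : dec g2).

Lemma simple_integral_msum_minorant s : simple_minorant s ->
  SI (D_msum tau g1 g2) E s = tau (SI g1 E s) (SI g2 E s).
Proof.
by case=> rs _; exact: (simple_integral_msum htau hdistr ringS d1 d2 ES rs).
Qed.

Lemma dle_tau_dinf_msum :
  D_dle (tau (dinf (SS g1)) (dinf (SS g2))) (dinf (SS (D_msum tau g1 g2))).
Proof.
have dm := D_decomposable_msum htau d1 d2.
apply: (dinf_greatest (distF_simple_integrals dm) (simple_integrals_neq0 _)).
  by apply: distF_tau => //; exact: distF_dinf_simple_integrals.
move=> _ /simple_integralsP[s ms ->]; rewrite simple_integral_msum_minorant //.
apply: dle_tau => //;
  do ?[exact: distF_dinf_simple_integrals | exact: dinf_le_simple_integral].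
- exact: (distF_simple_integral htau ringS d1 ES ms.1).
- exact: (distF_simple_integral htau ringS d2 ES ms.1).
Qed.

Lemma dinf_msum_le_continuity_point z : D_tau_continuous tau ->
  {for z, continuous (fun y : R => tau (dinf (SS g1)) (dinf (SS g2)) y%:E)} ->
  dinf (SS (D_msum tau g1 g2)) z%:E <= tau (dinf (SS g1)) (dinf (SS g2)) z%:E.
Proof.
move=> tau_cont cz.
have [p1 p1P] := grid_minorants d1; have [p2 p2P] := grid_minorants d2.
have [T [TP pT]] :=
  common_minorants (fun n j => (p1P n j).1) (fun n j => (p2P n j).1).
have c1 := dcvg_simple_integrals d1 p1P TP (fun n j w jn => (pT n j w jn).1).
have c2 := dcvg_simple_integrals d2 p2P TP (fun n j w jn => (pT n j w jn).2).
have distF_T g (dg : dec g) n := distF_simple_integral htau ringS dg ES (TP n).1.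
have := tau_cont _ _ _ _ (distF_T _ d1) (distF_T _ d2)
  (distF_dinf_simple_integrals d1) (distF_dinf_simple_integrals d2) c1 c2 z cz.
move=> /(ler_cvg_to (cvg_cst _)); apply; near=> n.
rewrite -simple_integral_msum_minorant //.
exact/dinf_le_simple_integral/(TP n)/(D_decomposable_msum htau d1 d2).
Unshelve. all: by end_near. Qed.

Lemma dinf_msum : D_tau_continuous tau ->
  dinf (SS (D_msum tau g1 g2)) = tau (dinf (SS g1)) (dinf (SS g2)).
Proof.
move=> tau_cont; apply: dle_anti; last exact: dle_tau_dinf_msum.
apply: dle_continuity_points => [||z]; last exact: dinf_msum_le_continuity_point.
- exact/distF_dinf_simple_integrals/(D_decomposable_msum htau d1 d2).
- by apply: distF_tau => //; exact: distF_dinf_simple_integrals.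
Qed.

End Sum.

End SumOfMeasures.

Theorem theorem5p5 (R : realType) (Omega : Type)
  (tau : (\bar R -> R) -> (\bar R -> R) -> (\bar R -> R))
  (Sigma : set (set Omega)) (g1 g2 : set Omega -> \bar R -> R)
  (f : Omega -> \bar R) (E : set Omega) :
  D_triangle_function tau -> D_tau_continuous tau -> D_tau_distributive tau ->
  sigma_ring Sigma -> [set: Omega] != set0 ->
  D_decomposable tau Sigma g1 -> D_cont_from_below Sigma g1 ->
  D_decomposable tau Sigma g2 -> D_cont_from_below Sigma g2 ->
  D_simple_measurable Sigma f -> (forall w, (0 <= f w)%E) ->
  Sigma E ->
  D_integrable tau Sigma g1 E f -> D_integrable tau Sigma g2 E f ->
  D_integrable tau Sigma (D_msum tau g1 g2) E f /\
  D_dintegral tau Sigma (D_msum tau g1 g2) E f =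
    tau (D_dintegral tau Sigma g1 E f) (D_dintegral tau Sigma g2 E f).
Proof.
move=> htau tau_cont hdistr /sigma_ring_setring ringS _ d1 _ d2 _ _ f_ge0 ES _ _.
have dm := D_decomposable_msum htau d1 d2.
split; first exact: (integrable_decomp htau ringS ES f_ge0 dm).
rewrite !(dintegralE htau ringS ES f_ge0) //.
exact: (dinf_msum htau hdistr ringS ES f_ge0 d1 d2 tau_cont).
Qed.
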